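(* For every $(\mathbf{j},y,x)\in\Sigma\times\mathbb{R}\times[0,1)$, every $n\in\mathbb{N}$ and every $r>0$, $$\mu_x\big(B^T_{(\mathbf{j},y,x)}(r)\cap\mathscr{P}^{n+1}(\mathbf{j},y,x)\big)=\frac1b\,\mu_{\frac{x+j_1}{b}}\Big(B^T_{G(\mathbf{j},y,x)}\big(\tfrac r\gamma\big)\cap\mathscr{P}^{n}\big(G(\mathbf{j},y,x)\big)\Big).$$
   Context: $b\ge2$ integer, $\gamma\in(0,1)$, $\phi$ a $\mathbb{Z}$-periodic Lipschitz function. $\Lambda=\{0,\dots,b-1\}$, $\Sigma=\Lambda^{\mathbb{Z}_+}$, $\nu$ uniform on $\Lambda$, $\sigma$ the left shift on $\Sigma$. $S(x,\mathbf{j})=\sum_{n\ge1}\gamma^{n-1}\phi\big(\frac{x+j_1+j_2b+\cdots+j_nb^{n-1}}{b^n}\big)$. $G(\mathbf{j},y,x)=\big(\sigma\mathbf{j},\ \frac{y-\phi(\frac{x+j_1}{b})}{\gamma},\ \frac{x+j_1}{b}\big)$. $\mu_x$ is the image of $\nu^{\mathbb{Z}_+}$ under $\mathbf{j}\mapsto(\mathbf{j},S(x,\mathbf{j}),x)$. $B^T_{(\mathbf{j},y,x)}(r)=\{(\mathbf{j}',y',x')\in\Sigma\times\mathbb{R}\times[0,1):|y-y'|\le r\}$. For $n\ge1$, $\mathscr{P}^n(\mathbf{j},y,x)=[j_1\cdots j_n]\times\mathbb{R}\times[0,1)$ where $[j_1\cdots j_n]$ is the cylinder of sequences starting with $j_1\cdots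 j_n$, and $\mathscr{P}^0(\mathbf{j},y,x)=\Sigma\times\mathbb{R}\times[0,1)$. *)

From HB Require Import structures.
From mathcomp Require Import all_boot all_order all_algebra.
From mathcomp Require Import all_classical all_reals.
From mathcomp Require Import topology normedtype sequences measure.
Unset Printing Implicit Defensive.
Import Order.TTheory GRing.Theory Num.Theory numFieldNormedType.Exports.
Local Open Scope ring_scope.
Local Open Scope classical_set_scope.

(* We write 'I_(b.-1.+1), which is
   'I_b whenever b >= 1 (the theorem assumes b >= 2); this makes the
   alphabet a pointed type, as required by [g_sigma_algebraType]. *)
Definition Lam (b : nat) := 'I_(b.-1.+1).
HB.instance Definition _ (b : nat) := Finite.on (Lam b).
HB.instance Definition _ (b : nat) := isPointed.Build (Lam b) ord0.

(* Sigma = Lambda^{Z_+}; the sequence j = (j_1, j_2, ...) is encoded as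
   j : nat -> Lam b with j 0 = j_1, j 1 = j_2, ... *)
Notation Sig b := (nat -> Lam b).

Definition cyl (b : nat) (m : nat) (w : Sig b) : set (Sig b) :=
  [set j | forall k, (k < m)%N -> j k = w k].

Definition cylinders (b : nat) : set (set (Sig b)) :=
  [set A | exists m w, A = cyl b m w].

Notation SigM b := (g_sigma_algebraType (cylinders b)).

Definition shift (b : nat) (j : Sig b) : Sig b := fun n => j n.+1.

Section defs.
Variable R : realType.

(* S(x,j) = sum_{n>=1} gamma^{n-1} phi((x + j_1 + j_2 b + ... + j_n b^{n-1})/b^n) *)
Definition Sfun (b : nat) (gamma : R) (phi : R -> R) (x : R) (j : Sig b) : R :=
  limn (series (fun n : nat =>
    gamma ^+ n * phi ((x + \sum_(k < n.+1) (j k : nat)%:R * (b%:R) ^+ k)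
                       / (b%:R) ^+ n.+1) : R) : nat -> R).

(* Points of Sigma x R x [0,1) are encoded as ((j, y), x). *)
Definition G (b : nat) (gamma : R) (phi : R -> R) (p : Sig b * R * R)
  : Sig b * R * R :=
  let: (j, y, x) := p in
  (shift b j, (y - phi ((x + (j 0%N : nat)%:R) / b%:R)) / gamma,
   (x + (j 0%N : nat)%:R) / b%:R).

(* mu_x : image of the uniform Bernoulli measure P on Sigma under
   j |-> (j, S(x,j), x). *)
Definition mu (b : nat) (gamma : R) (phi : R -> R)
  (P : set (SigM b) -> \bar R) (x : R) (A : set (Sig b * R * R)) : \bar R :=
  P [set j : SigM b | A (j, Sfun b gamma phi x j, x)].

Definition BT (b : nat) (p : Sig b * R * R) (r : R) : set (Sig b * R * R) :=
  [set q | 0 <= q.2 < 1 /\ `|p.1.2 - q.1.2| <= r].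

Definition Part (b : nat) (n : nat) (p : Sig b * R * R) : set (Sig b * R * R) :=
  [set q | 0 <= q.2 < 1 /\ cyl b n p.1.1 q.1.1].

End defs.

Arguments Sfun {R}.
Arguments G {R}.
Arguments mu {R}.
Arguments BT {R}.
Arguments Part {R}.

From Pilot Require Import Defs.
From HB Require Import structures.
From mathcomp Require Import all_boot all_order all_algebra.
From mathcomp Require Import all_classical all_reals.
From mathcomp Require Import topology normedtype sequences measure measurable_realfun.
From mathcomp Require Import lebesgue_stieltjes_measure interval_inference ring lra.
Import Order.TTheory GRing.Theory Num.Theory numFieldNormedType.Exports.
Local Open Scope ring_scope.
Local Open Scope classical_set_scope.

(* Write x1 = (x + j_1)/b.  Since phi is periodic and Lipschitz it is bounded,
   so the series defining S converges, S(x, .) is measurable, and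
   S(x, j) = phi(x1) + gamma S(x1, shift j).  Hence on the cylinder [j_1] the
   condition |y - S(x, j')| <= r becomes |(y - phi x1)/gamma - S(x1, shift j')|
   <= r/gamma, and [j_1 ... j_(n+1)] becomes [j_1] intersected with the shift
   preimage of [j_2 ... j_(n+1)].  It remains that the uniform measure satisfies
   P([c] & shift^-1 A) = P(A)/b, which holds on cylinders and then on all
   measurable A by uniqueness of extension. *)

Section cylinders.
Variable b : nat.

Definition extend_word {N} (v : {ffun 'I_N -> Lam b}) : Sig b :=
  fun k => odflt point (omap v (insub k)).

Lemma extend_wordE N (v : {ffun 'I_N -> Lam b}) k (hk : (k < N)%N) :
  extend_word v k = v (Ordinal hk).
Proof. by rewrite /extend_word insubT /=; congr (v _); apply: val_inj. Qed.

Lemma measurable_cyl m w : measurable (cyl b m w : set (SigM b)).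
Proof. by apply: sub_sigma_algebra; exists m, w. Qed.

Definition prefix_determined N (S : set (Sig b)) :=
  forall j j', (forall k, (k < N)%N -> j k = j' k) -> S j -> S j'.

Lemma measurable_prefix_determined N (S : set (Sig b)) :
  prefix_determined N S -> measurable (S : set (SigM b)).
Proof.
move=> hS.
have -> : S = \bigcup_(v in [set v : {ffun 'I_N -> Lam b} | S (extend_word v)])
                cyl b N (extend_word v).
  apply/seteqP; split => [j Sj|j [v Sv vj]].
    exists [ffun i : 'I_N => j i]; last by move=> k hk; rewrite extend_wordE ffunE.
    by apply: hS Sj => k hk; rewrite extend_wordE ffunE.
  by apply: hS Sv => k hk; rewrite vj.
apply: fin_bigcup_measurable; first exact: finite_finset.
by move=> v _; apply: measurable_cyl.
Qed.

Lemma measurable_shift : measurable_fun setT (Defs.shift b : SigM b -> SigM b).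
Proof.
apply: (@measurability _ _ (SigM b) (SigM b) _ _ (cylinders b)) => //.
move=> _ [_ [m [w ->]] <-].
apply: (@measurable_prefix_determined m.+1) => j j' jj' [_ hj]; split => // k hk.
by rewrite /Defs.shift -jj' // -hj.
Qed.

Lemma cylS n w :
  cyl b n.+1 w = [set j | j 0%N = w 0%N /\ cyl b n (Defs.shift b w) (Defs.shift b j)].
Proof.
apply/seteqP; split => [j hj|j [hj0 hj] [|k] hk //]; last exact: hj.
by split => [|k hk]; apply: hj.
Qed.

Lemma cylI_le m w m' w' : (m <= m')%N ->
  cyl b m w `&` cyl b m' w' = cyl b m' w' \/ cyl b m w `&` cyl b m' w' = set0.
Proof.
move=> le_mm'.
have [ww'|ww'] := pselect (forall k, (k < m)%N -> w k = w' k).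
  left; apply/seteqP; split => [j [] //|j hj]; split => // k hk.
  by rewrite hj ?ww' //; exact: leq_trans hk le_mm'.
right; apply/seteqP; split => [j [hj hj']|//].
by apply: ww' => k hk; rewrite -hj // hj' //; exact: leq_trans hk le_mm'.
Qed.

Definition cylinders0 : set (set (SigM b)) := cylinders b `|` [set set0].

Lemma setI_closed_cylinders0 : setI_closed cylinders0.
Proof.
move=> A B [[m [w ->]]|->] [[m' [w' ->]]|->]; rewrite ?set0I ?setI0; try by right.
have [le|/ltnW le] := leqP m m'.
  by case: (cylI_le m w m' w' le) => ->; [left; exists m', w'|right].
by rewrite setIC; case: (cylI_le m' w' m w le) => ->; [left; exists m, w|right].
Qed.

Lemma measurableE_cylinders0 : measurable = <<s cylinders0 >>.
Proof.
apply/seteqP; split; first by apply: sub_sigma_algebra2 => A hA; left.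
apply: smallest_sub; first exact: smallest_sigma_algebra.
by move=> A [hA|->]; [exact: sub_sigma_algebra|exact: measurable0].
Qed.

End cylinders.

Section uniform_measure.
Variables (R : realType) (b : nat) (P : {measure set (SigM b) -> \bar R}).
Hypothesis hP : forall m w, P (cyl b m w : set (SigM b)) = (b%:R ^- m : R)%:E.

Lemma measure_first_letter_shift (c : Lam b) (A : set (SigM b)) : measurable A ->
  P [set j : SigM b | j 0%N = c /\ A (Defs.shift b j)] = ((b%:R^-1 : R)%:E * P A)%E.
Proof.
pose C : set (SigM b) := cyl b 1 (fun=> c).
have [Pc PcE] : {Pc : {measure set (SigM b) -> \bar R} |
    forall B, Pc B = P (Defs.shift b @^-1` B `&` C)}.
  refine (exist _ (pushforward (mrestr P (measurable_cyl b 1 (fun=> c)))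
    (Defs.shift b : SigM b -> SigM b) : {measure set (SigM b) -> \bar R})
    (fun=> erefl)).
  exact: measurable_shift.
have -> : [set j : SigM b | j 0%N = c /\ A (Defs.shift b j)] =
    Defs.shift b @^-1` A `&` C.
  apply/seteqP; split => [j [j0 Aj]|j [Aj /(_ 0%N isT) j0]] //.
  by split => // -[].
rewrite -PcE; transitivity (mscale ((b%:R^-1 : R)%:nng) P A); last by [].
apply: (measure_unique _ (fun=> setT) (measurableE_cylinders0 b)
  (@setI_closed_cylinders0 b)) => //.
- by move=> _; left; exists 0%N, (fun=> c); apply/seteqP; split.
- by rewrite bigcup_const.
- move=> _ [[m [w ->]]|->]; last by rewrite !measure0.
  rewrite PcE; have -> : Defs.shift b @^-1` cyl b m w `&` C =
      cyl b m.+1 (fun k => if k is k'.+1 then w k' else c).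
    rewrite cylS; apply/seteqP; split => [j [wj /(_ 0%N isT) j0]|j [j0 wj]] //.
    by split => // -[].
  transitivity ((b%:R^-1 : R)%:E * P (cyl b m w : set (SigM b)))%E; last by [].
  by rewrite !hP -EFinM exprS invfM.
- by move=> _; rewrite PcE preimage_setT setTI hP ltry.
Qed.

End uniform_measure.

Section periodic.
Variables (R : realType) (phi : R -> R).
Hypothesis hper : forall t, phi (t + 1) = phi t.

Lemma periodicDn t n : phi (t + n%:R) = phi t.
Proof. by elim: n => [|n IHn]; rewrite ?addr0 // -natr1 addrA hper. Qed.

Lemma periodicDz t (z : int) : phi (t + z%:~R) = phi t.
Proof.
case: z => n; first exact: periodicDn.
by rewrite -(periodicDn _ n.+1) NegzE mulrNz subrK.
Qed.

Lemma periodic_lipschitz_bounded :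
  (exists L, forall s t, `|phi s - phi t| <= L * `|s - t|) ->
  exists M, forall t, `|phi t| <= M.
Proof.
move=> [L hL]; exists (`|phi 0| + `|L|) => t.
pose u := t - (Num.floor t)%:~R.
have -> : phi t = phi u by rewrite -(periodicDz u (Num.floor t)) subrK.
have u_ge0 : 0 <= u by rewrite subr_ge0 Num.Theory.floor_le.
have u_lt1 : u < 1 by rewrite ltrBlDr addrC -intrD1 Num.Theory.floorD1_gt.
have Lu : L * u <= `|L|.
  apply: (le_trans (ler_wpM2r u_ge0 (ler_norm L))).
  by rewrite ler_piMr ?normr_ge0 ?ltW.
have := hL u 0; rewrite subr0 (ger0_norm u_ge0).
have := ler_normD (phi u - phi 0) (phi 0); rewrite subrK.
lra.
Qed.

End periodic.

Section self_similar_sum.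
Variables (R : realType) (b : nat) (gamma : R) (phi : R -> R).

Definition Sterm x (j : Sig b) n : R :=
  gamma ^+ n * phi ((x + \sum_(k < n.+1) (j k : nat)%:R * b%:R ^+ k) / b%:R ^+ n.+1).

Lemma Sterm0 x j : Sterm x j 0 = phi ((x + (j 0%N : nat)%:R) / b%:R).
Proof. by rewrite /Sterm big_ord1 !expr0 mulr1 mul1r expr1. Qed.

Lemma StermS x j n : (0 < b)%N ->
  Sterm x j n.+1 = gamma * Sterm ((x + (j 0%N : nat)%:R) / b%:R) (Defs.shift b j) n.
Proof.
move=> b_gt0; have b_neq0 : b%:R != 0 :> R by rewrite pnatr_eq0 -lt0n.
rewrite /Sterm exprS -mulrA; congr (_ * (_ * phi _)).
rewrite big_ord_recl /= expr0 mulr1.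
under eq_bigr => i _ do rewrite /bump /= add1n exprSr mulrA.
by rewrite -big_distrl /= exprS; field; rewrite b_neq0 expf_neq0.
Qed.

Lemma measurable_partial_Sfun x n :
  measurable_fun setT (fun j : SigM b => series (Sterm x j) n).
Proof.
move=> _ Y _; rewrite setTI.
apply: (@measurable_prefix_determined b n) => j j' jj'; rewrite /preimage /=.
suff -> : series (Sterm x j') n = series (Sterm x j) n by [].
apply: eq_big_nat => k /andP[_ kn]; congr (_ * phi ((_ + _) / _)).
by apply: eq_bigr => i _; rewrite jj' // (leq_trans (ltn_ord i) kn).
Qed.

Section bounded_phi.
Hypotheses (hgamma : 0 <= gamma < 1) (hphi : exists M, forall t, `|phi t| <= M).

Lemma is_cvg_series_Sterm x j : cvgn (series (Sterm x j)).
Proof.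
have [M hM] := hphi; have [g0 g1] := andP hgamma.
have M0 : 0 <= M by exact: le_trans (hM 0).
apply: normed_cvg; apply: (@series_le_cvg _ _ (geometric M gamma)) => //= n.
- by rewrite mulr_ge0 // exprn_ge0.
- by rewrite /Sterm normrM ger0_norm ?exprn_ge0 // mulrC ler_wpM2r ?exprn_ge0.
- by apply: is_cvg_geometric_series; rewrite ger0_norm.
Qed.

Lemma measurable_Sfun x :
  measurable_fun setT (Sfun b gamma phi x : SigM b -> R).
Proof.
apply: (@measurable_fun_cvg _ _ _ _ (fun n (j : SigM b) => series (Sterm x j) n)).
  exact: measurable_partial_Sfun.
by move=> j _; exact: is_cvg_series_Sterm.
Qed.

Lemma measurable_Sfun_dist x a r :
  measurable [set j : SigM b | `|a - Sfun b gamma phi x j| <= r].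
Proof.
have -> : [set j : SigM b | `|a - Sfun b gamma phi x j| <= r] =
    setT `&` Sfun b gamma phi x @^-1` `[a - r, a + r].
  by apply/seteqP; split => j /=; rewrite in_itv /= ler_distlC; [split|case].
by apply: measurable_Sfun => //; exact: measurable_itv.
Qed.

Lemma Sfun_shift x (j : Sig b) : (0 < b)%N ->
  Sfun b gamma phi x j = phi ((x + (j 0%N : nat)%:R) / b%:R) +
    gamma * Sfun b gamma phi ((x + (j 0%N : nat)%:R) / b%:R) (Defs.shift b j).
Proof.
move=> b_gt0; set x1 := (x + _) / _; apply: cvg_lim => //; rewrite -cvg_shiftS.
have -> : [sequence series (Sterm x j) n.+1]_n =
    (fun n => phi x1 + gamma * series (Sterm x1 (Defs.shift b j)) n).
  apply/funext => n; rewrite /series /= big_nat_recl // Sterm0 big_distrr /=.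
  by congr (_ + _); apply: eq_bigr => k _; rewrite StermS.
apply: cvgD; first exact: cvg_cst.
by apply: cvgM; [exact: cvg_cst|exact: is_cvg_series_Sterm].
Qed.

End bounded_phi.
End self_similar_sum.

Lemma inv_branch_in_unit (R : realFieldType) b (c : Lam b) (x : R) :
  (0 < b)%N -> 0 <= x < 1 -> 0 <= (x + (c : nat)%:R) / b%:R < 1.
Proof.
move=> b_gt0 /andP[x_ge0 x_lt1].
have c_lt_b : ((c : nat) < b)%N by rewrite -[b in (_ < b)%N](prednK b_gt0) ltn_ord.
have : (c : nat)%:R + 1 <= b%:R :> R by rewrite natr1 ler_nat.
rewrite divr_ge0 ?addr_ge0 ?ler0n //= ltr_pdivrMr ?ltr0n // mul1r.
lra.
Qed.

Lemma ler_dist_rescale (R : realFieldType) (g y a s r : R) : 0 < g ->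
  (`|(y - a) / g - s| <= r / g) = (`|y - (a + g * s)| <= r).
Proof.
move=> g_gt0; have -> : (y - a) / g - s = (y - (a + g * s)) / g.
  by field; rewrite gt_eqF.
by rewrite normrM normfV (gtr0_norm g_gt0) ler_pM2r ?invr_gt0.
Qed.

Lemma mu_BT_Part (R : realType) b gamma phi (P : set (SigM b) -> \bar R)
    (p : Sig b * R * R) x r n :
  0 <= x < 1 ->
  mu b gamma phi P x (BT b p r `&` Part b n p) =
  P ([set j | `|p.1.2 - Sfun b gamma phi x j| <= r] `&` cyl b n p.1.1).
Proof.
move=> hx; congr P; apply/seteqP; rewrite /BT /Part.
by split=> j /=; rewrite hx; [case=> -[_ ?] [_ ?]|case].
Qed.

Theorem lemma9p1 (R : realType) (b : nat) (gamma : R) (phi : R -> R)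
  (hb : (2 <= b)%N) (hgamma : 0 < gamma < 1)
  (hper : forall t : R, phi (t + 1) = phi t)
  (hlip : exists L : R, forall s t : R, `|phi s - phi t| <= L * `|s - t|)
  (P : {measure set (SigM b) -> \bar R})
  (hP : forall (m : nat) (w : Sig b),
      P (cyl b m w : set (SigM b)) = ((b%:R ^- m : R))%:E)
  (j : Sig b) (y x : R) (hx : 0 <= x < 1) (n : nat) (r : R) (hr : 0 < r) :
  let p := (j, y, x) in
  mu b gamma phi P x (BT b p r `&` Part b n.+1 p) =
  (((b%:R)^-1 : R)%:E *
  mu b gamma phi P ((x + (j 0%N : nat)%:R) / b%:R)
     (BT b (G b gamma phi p) (r / gamma) `&` Part b n (G b gamma phi p)))%E.
Proof.
move=> p; have b_gt0 : (0 < b)%N by exact: leq_trans hb.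
have [g_gt0 g_lt1] := andP hgamma.
have hgamma' : 0 <= gamma < 1 by rewrite ltW.
have phi_bounded := periodic_lipschitz_bounded _ _ hper hlip.
set x1 := (x + _) / _.
rewrite !mu_BT_Part //=; last exact: inv_branch_in_unit.
have Sfun_first_letter j' : j' 0%N = j 0%N ->
    Sfun b gamma phi x j' = phi x1 + gamma * Sfun b gamma phi x1 (Defs.shift b j').
  by move=> j'0; rewrite (Sfun_shift _ _ _ _ hgamma' phi_bounded) // j'0.
rewrite -(measure_first_letter_shift _ _ _ hP (j 0%N)); last first.
  by apply: measurableI; [exact: measurable_Sfun_dist|exact: measurable_cyl].
congr (P _); rewrite cylS; apply/seteqP.
split=> [j' /= [yj' [j'0 j'j]]|j' /= [j'0 [yj' j'j]]]; do ?split => //.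
- by rewrite ler_dist_rescale // -Sfun_first_letter.
- by rewrite Sfun_first_letter // -ler_dist_rescale.
Qed.
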